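(* Let $\odot$ be a pseudo-multiplication on $[0,\infty]$ and let $\phi$ be the supremum of the set of $\odot$-finite elements. Then there do not exist $t,t'\in[0,\infty]$ with $t<\phi<t'$ and $t\odot t'=\phi$.
   Context: A pseudo-multiplication is a binary operation $\odot:[0,\infty]\times[0,\infty]\to[0,\infty]$ such that: $\odot$ is associative; $\odot$ is continuous on $(0,\infty)\times[0,\infty]$; for every $t$, the map $s\mapsto s\odot t$ is continuous on $(0,\infty]$; $\odot$ is nondecreasing in each argument; there is a left identity element $1_{\odot}$, i.e. $1_{\odot}\odot t=t$ for all $t$; there are no zero divisors, i.e. $s\odot t=0$ implies $s=0$ or $t=0$; and $0$ is an annihilator, i.e. $0\odot t=t\odot 0=0$ for all $t$. For $t\in[0,\infty]$ put $O(t)=\inf_{s>0} s\odot t$. An element $t$ is called $\odot$-finite if $O(t)=0$. *)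

From HB Require Import structures.
From mathcomp Require Import all_boot all_order all_algebra.
From mathcomp Require Import all_classical all_reals all_analysis.
Set Implicit Arguments. Unset Strict Implicit. Unset Printing Implicit Defensive.
Import Order.TTheory GRing.Theory Num.Theory.
Local Open Scope classical_set_scope.
Local Open Scope ereal_scope.

Definition Ipos (R : realType) : set (\bar R) := [set x | 0 <= x].

(* pseudo-multiplication on [0, +oo]; the operation is a total function on \bar R,
   and all axioms are imposed on arguments in [0, +oo] only. *)
Definition pseudo_mult (R : realType) (op : \bar R -> \bar R -> \bar R) : Prop :=
  (
      (forall s t, 0 <= s -> 0 <= t -> 0 <= op s t) /\
      (forall r s t, 0 <= r -> 0 <= s -> 0 <= t -> op (op r s) t = op r (op s t)) /\
      {within [set p : \bar R * \bar R | (0 < p.1 < +oo) /\ 0 <= p.2],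
         continuous (fun p => op p.1 p.2)} /\
      (forall t, 0 <= t -> {within [set s : \bar R | 0 < s], continuous (fun s => op s t)}) /\
      (forall s s' t, 0 <= s -> s <= s' -> 0 <= t -> op s t <= op s' t) /\
      (forall s t t', 0 <= s -> 0 <= t -> t <= t' -> op s t <= op s t') /\
      (exists2 e, 0 <= e & forall t, 0 <= t -> op e t = t) /\
      (forall s t, 0 <= s -> 0 <= t -> op s t = 0 -> s = 0 \/ t = 0) /\
      (forall t, 0 <= t -> op 0 t = 0 /\ op t 0 = 0)).

Definition Oinf (R : realType) (op : \bar R -> \bar R -> \bar R) (t : \bar R) : \bar R :=
  ereal_inf [set op s t | s in [set s : \bar R | 0 < s]].

Definition odot_finite (R : realType) (op : \bar R -> \bar R -> \bar R) (t : \bar R) : Prop :=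
  0 <= t /\ Oinf op t = 0.

Definition phi_of (R : realType) (op : \bar R -> \bar R -> \bar R) : \bar R :=
  ereal_sup [set t | odot_finite op t].

From mathcomp Require Import all_boot all_order all_algebra.
From mathcomp Require Import all_classical all_reals all_analysis.
Set Implicit Arguments. Unset Strict Implicit. Unset Printing Implicit Defensive.
Import Order.TTheory GRing.Theory Num.Theory.
Local Open Scope classical_set_scope.
Local Open Scope ereal_scope.

(* Since t' > phi, t' is not
   finite: c := O(t') > 0.  Every element below phi is finite (O is monotone),
   while for u > 0 we have O(t' (.) u) >= c (.) u > 0 by associativity; hence
   t' (.) u >= phi for all u > 0.  As t > 0, we get
     0 < t (.) phi <= t (.) (t' (.) u) = (t (.) t') (.) u = phi (.) u,
   contradicting phi (.) u -> phi (.) 0 = 0 as u -> 0, by continuity at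
   (phi, 0), which is legitimate since 0 < phi < t' forces phi to be finite. *)

Section PseudoMultiplication.
Variables (R : realType) (op : \bar R -> \bar R -> \bar R).

Hypothesis op_ge0 : forall s t, 0 <= s -> 0 <= t -> 0 <= op s t.
Hypothesis opA :
  forall r s t, 0 <= r -> 0 <= s -> 0 <= t -> op (op r s) t = op r (op s t).
Hypothesis op_homo_l :
  forall s s' t, 0 <= s -> s <= s' -> 0 <= t -> op s t <= op s' t.
Hypothesis op_homo_r :
  forall s t t', 0 <= s -> 0 <= t -> t <= t' -> op s t <= op s t'.
Hypothesis op_eq0 :
  forall s t, 0 <= s -> 0 <= t -> op s t = 0 -> s = 0 \/ t = 0.

Lemma op_gt0 s t : 0 < s -> 0 < t -> 0 < op s t.
Proof.
move=> s0 t0; rewrite lt_neqAle op_ge0 ?(ltW s0) ?(ltW t0) // andbT eq_sym.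
by apply/eqP => /(op_eq0 (ltW s0) (ltW t0))[s_eq0|t_eq0];
  [move: s0; rewrite s_eq0 | move: t0; rewrite t_eq0]; rewrite ltxx.
Qed.

Lemma Oinf_ge0 t : 0 <= t -> 0 <= Oinf op t.
Proof.
by move=> t0; apply: le_ereal_inf_tmp => _ [s /= s0 <-]; apply: op_ge0 (ltW s0) t0.
Qed.

Lemma le_Oinf s t : 0 <= s -> s <= t -> Oinf op s <= Oinf op t.
Proof.
move=> s0 st; apply: le_ereal_inf_tmp => _ [r /= r0 <-].
apply: le_trans (op_homo_r (ltW r0) s0 st).
by apply: ereal_inf_lbound; exists r.
Qed.

Lemma odot_finite_le_phi t : odot_finite op t -> t <= phi_of op.
Proof. exact: ereal_sup_ubound. Qed.

Lemma Oinf_eq0_of_lt_phi t : 0 <= t -> t < phi_of op -> Oinf op t = 0.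
Proof.
move=> t0 /ereal_sup_gt[v [v0 Ov0] tv].
by apply/eqP; rewrite eq_le Oinf_ge0 // andbT -Ov0 le_Oinf // ltW.
Qed.

Lemma Oinf_gt0_of_phi_lt t : phi_of op < t -> 0 <= t -> 0 < Oinf op t.
Proof.
move=> phit t0; rewrite lt_neqAle Oinf_ge0 // andbT eq_sym.
apply/eqP => Ot0; have := odot_finite_le_phi (conj t0 Ot0).
by rewrite leNgt phit.
Qed.

Lemma Oinf_op_ge t u : 0 <= t -> 0 <= u -> op (Oinf op t) u <= Oinf op (op t u).
Proof.
move=> t0 u0; apply: le_ereal_inf_tmp => _ [s /= s0 <-].
rewrite -opA ?(ltW s0) //; apply: op_homo_l (Oinf_ge0 t0) _ u0.
by apply: ereal_inf_lbound; exists s.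
Qed.

Lemma phi_le_op t u : 0 <= t -> 0 < Oinf op t -> 0 < u -> phi_of op <= op t u.
Proof.
move=> t0 Ot0 u0; rewrite leNgt; apply/negP.
move=> /(Oinf_eq0_of_lt_phi (op_ge0 t0 (ltW u0))) Otu0.
have := Oinf_op_ge t0 (ltW u0).
by rewrite Otu0 leNgt op_gt0.
Qed.

End PseudoMultiplication.

Lemma op_lt_right_near0 (R : realType) (op : \bar R -> \bar R -> \bar R)
    (a d : \bar R) :
  {within [set p : \bar R * \bar R | (0 < p.1 < +oo) /\ 0 <= p.2],
     continuous (fun p => op p.1 p.2)} ->
  0 < a < +oo -> op a 0 = 0 -> 0 < d -> exists2 u, 0 < u & op a u < d.
Proof.
move=> op_cont a_fin a0 d0.
have a0D : [set p : \bar R * \bar R | (0 < p.1 < +oo) /\ 0 <= p.2] (a, 0).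
  by rewrite /= a_fin lexx.
have ltd_nbhs : nbhs (op a 0) [set y | y < d].
  by apply: open_nbhs_nbhs; split; [exact: open_ereal_lt_ereal | rewrite /= a0].
have [[N1 N2] /= [N1a /nbhs_EFin/nbhs_ballP[e e0 N2e]] N12] :=
  (subspace_continuousP _ _).1 op_cont _ a0D _ ltd_nbhs.
have e2_gt0 : (0 < e / 2)%R by rewrite divr_gt0.
exists (e / 2)%:E; first by rewrite lte_fin.
apply: (N12 (a, (e / 2)%:E)); split => //=; [exact: nbhs_singleton| |].
  apply: N2e; rewrite /ball_ /= sub0r normrN gtr0_norm //.
  by rewrite ltr_pdivrMr // ltr_pMr // ltr1n.
by rewrite lee_fin ltW.
Qed.

Theorem corollary2p9 (R : realType) (op : \bar R -> \bar R -> \bar R) :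
  pseudo_mult op ->
  ~ (exists t t' : \bar R,
        [/\ 0 <= t, t < phi_of op, phi_of op < t' & op t t' = phi_of op]).
Proof.
move=> [op_ge0 [opA [op_cont [_ [op_homo_l [op_homo_r [_ [op_eq0 op_ann]]]]]]]].
move=> [t [t' [t0 tphi phit' tt'phi]]].
have phi_gt0 : 0 < phi_of op := le_lt_trans t0 tphi.
have t'0 : 0 <= t' by rewrite ltW // (lt_trans phi_gt0).
have t_gt0 : 0 < t.
  rewrite lt_neqAle t0 andbT eq_sym; apply/eqP => t_eq0.
  by move: phi_gt0; rewrite -tt'phi t_eq0 (op_ann _ t'0).1 ltxx.
have phi_fin : 0 < phi_of op < +oo by rewrite phi_gt0 (lt_le_trans phit') ?leey.
have [u u0] := op_lt_right_near0 op_cont phi_fin (op_ann _ (ltW phi_gt0)).2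
  (op_gt0 op_ge0 op_eq0 t_gt0 phi_gt0).
apply/negP; rewrite -leNgt -{2}tt'phi opA ?(ltW t_gt0) ?(ltW u0) //.
apply: (op_homo_r _ _ _ (ltW t_gt0) (ltW phi_gt0)).
have Ot'_gt0 := Oinf_gt0_of_phi_lt op_ge0 phit' t'0.
by have := phi_le_op op_ge0 opA op_homo_l op_homo_r op_eq0 t'0 Ot'_gt0 u0.
Qed.
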